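(* Let a particle of rest mass $m>0$ and charge $q$ move in an external electromagnetic field with potential $(A^0,\mathbf A)(t,\mathbf x)$, $\mathbf E=-\partial_t\mathbf A/c-\nabla A^0$, $\mathbf B=\nabla\wedge\mathbf A$, according to $$\dot{\mathbf p}=q\mathbf E(t,\mathbf x)+\frac{\mathbf p}{\sqrt{m^2c^2+\mathbf p^2}}\wedge q\mathbf B(t,\mathbf x),\qquad \dot{\mathbf x}=\frac{c\,\mathbf p}{\sqrt{m^2c^2+\mathbf p^2}} .$$ Reparametrize the motion by $\xi=ct-z$ and consider the Hamiltonian $\hat H(\hat{\mathbf x},\hat{\boldsymbol\Pi};\xi)$ defined in the context, with Hamilton equations $\hat{\mathbf x}'=\partial\hat H/\partial\hat{\boldsymbol\Pi}$, $\hat{\boldsymbol\Pi}'=-\partial \hat H/\partial\hat{\mathbf x}$. Then the equations of motion above, or equivalently these Hamilton equations, are equivalent to the system $$\hat{\mathbf x}^{\perp}{}'=\frac{\hat{\mathbf u}^{\perp}}{\hat s},\qquad \hat z'=\frac{1+|\hat{\mathbf u}^{\perp}|^2}{2\hat s^2}-\frac12,$$ $$\hat{\mathbf u}^{\perp}{}'=\frac{q}{mc^2\,\hat s}\big[\hat\gamma\hat{\mathbf E}+\hat{\mathbf u}\wedge\hat{\mathbf B}\big]^{\perp},\qquad \hat s'=\frac{q}{mc^2}\Big[\frac{\hat{\mathbf u}^{\perp}\cdot\hat{\mathbf E}^{\perp}}{\hat s}-\hat E^z-\frac{(\hat{\mathbf u}^{\perp}\wedge\hat{\mathbf B}^{\perp})^z}{\hat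 s}\Big],$$ where $\hat\gamma=\frac{1+|\hat{\mathbf u}^{\perp}|^2+\hat s^2}{2\hat s}$, $\hat u^z=\hat\gamma-\hat s$, $\hat{\mathbf E}(\xi,\hat{\mathbf x})=\mathbf E\big((\xi+\hat z)/c,\hat{\mathbf x}\big)$ and similarly for $\hat{\mathbf B}$. Moreover, along every solution of the Hamilton equations, $\frac{d\hat H}{d\xi}=\frac{\partial\hat H}{\partial\xi}$.
   Context: Coordinates $\mathbf x=(x,y,z)$; $\mathbf k$ is the unit vector along $z$; the superscript $\perp$ denotes the $(x,y)$-components of a vector. Gaussian units. $\mathbf u=\mathbf p/(mc)$, $\gamma=\sqrt{1+\mathbf u^2}$, and $s:=\gamma-u^z>0$ (the ''light-like relativistic factor''). Since $|\dot{\mathbf x}|<c$, $\xi(t)=ct-z(t)$ is strictly increasing along any motion and is used as the new independent variable: for a dynamical variable $f(t)$, $\hat f$ is defined by $\hat f(\xi(t))=f(t)$; for a field $f(t,\mathbf x)$, $\hat f(\xi,\hat{\mathbf x}):=f((\xi+\hat z)/c,\hat{\mathbf x})$; a prime denotes $d/d\xi$. The Hamiltonian is $$\hat H(\hat{\mathbf x},\hat{\boldsymbol\Pi};\xi)=mc^2\,\frac{1+\hat s^2+|\hat{\mathbf u}^{\perp}|^2}{2\hat s}+q\hat A^0(\xi,\hat{\mathbf x}),\quad \hat{\mathbf u}^{\perp}=\frac{\hat{\boldsymbol\Pi}^{\perp}-q\hat{\mathbf A}^{\perp}(\xi,\hat{\mathbf x})}{mc^2},\quad \hat s=-\frac{\hat\Pi^z+q[\hat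 A^0-\hat A^z](\xi,\hat{\mathbf x})}{mc^2},$$ where $\hat{\boldsymbol\Pi}=\partial\hat{\mathcal L}/\partial\hat{\mathbf x}'$ is the momentum conjugate to $\hat{\mathbf x}$ for the Lagrangian $\hat{\mathcal L}=-mc^2\sqrt{1+2\hat z'-|\hat{\mathbf x}^{\perp}{}'|^2}-q(1+\hat z')\hat A^0+q\,\hat{\mathbf x}'\cdot\hat{\mathbf A}$; $\partial\hat H/\partial\xi$ denotes the partial derivative with respect to the explicit $\xi$-dependence at fixed $(\hat{\mathbf x},\hat{\boldsymbol\Pi})$. *)

From HB Require Import structures.
From mathcomp Require Import all_boot all_order all_algebra.
From mathcomp Require Import all_classical all_reals all_analysis.
Set Implicit Arguments. Unset Strict Implicit. Unset Printing Implicit Defensive.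
Import Order.TTheory GRing.Theory Num.Theory.
Import numFieldNormedType.Exports.
Local Open Scope classical_set_scope.
Local Open Scope ring_scope.

(* A space-time event (t, x, y, z) as a point of R^4 (coordinates in this order;
   t is the time, not ct). *)
Definition ev {R : realType} (t x y z : R) : 'rV[R]_4 :=
  \row_(i < 4) nth 0 [:: t; x; y; z] i.

Record potential (R : realType) := Potential {
  A0 : 'rV[R]_4 -> R ;
  Ax : 'rV[R]_4 -> R ;
  Ay : 'rV[R]_4 -> R ;
  Az : 'rV[R]_4 -> R }.

Definition pot_differentiable {R : realType} (A : potential R) : Prop :=
  forall e : 'rV[R]_4,
    [/\ differentiable (A0 A) e, differentiable (Ax A) e,
        differentiable (Ay A) e & differentiable (Az A) e].

Definition d_t {R : realType} (f : 'rV[R]_4 -> R) (t x y z : R) : R :=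
  derive1 (fun w => f (ev w x y z)) t.
Definition d_x {R : realType} (f : 'rV[R]_4 -> R) (t x y z : R) : R :=
  derive1 (fun w => f (ev t w y z)) x.
Definition d_y {R : realType} (f : 'rV[R]_4 -> R) (t x y z : R) : R :=
  derive1 (fun w => f (ev t x w z)) y.
Definition d_z {R : realType} (f : 'rV[R]_4 -> R) (t x y z : R) : R :=
  derive1 (fun w => f (ev t x y w)) z.

Definition Efx {R : realType} (c : R) (A : potential R) t x y z : R :=
  - d_t (Ax A) t x y z / c - d_x (A0 A) t x y z.
Definition Efy {R : realType} (c : R) (A : potential R) t x y z : R :=
  - d_t (Ay A) t x y z / c - d_y (A0 A) t x y z.
Definition Efz {R : realType} (c : R) (A : potential R) t x y z : R :=
  - d_t (Az A) t x y z / c - d_z (A0 A) t x y z.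

Definition Bfx {R : realType} (A : potential R) t x y z : R :=
  d_y (Az A) t x y z - d_z (Ay A) t x y z.
Definition Bfy {R : realType} (A : potential R) t x y z : R :=
  d_z (Ax A) t x y z - d_x (Az A) t x y z.
Definition Bfz {R : realType} (A : potential R) t x y z : R :=
  d_x (Ay A) t x y z - d_y (Ax A) t x y z.

Definition EOM_at {R : realType} (c m q : R) (A : potential R)
    (x y z px py pz : R -> R) (t : R) : Prop :=
  let X := x t in let Y := y t in let Z := z t in
  let PX := px t in let PY := py t in let PZ := pz t in
  let D := Num.sqrt (m ^+ 2 * c ^+ 2 + (PX ^+ 2 + PY ^+ 2 + PZ ^+ 2)) in
  let ex := Efx c A t X Y Z in let ey := Efy c A t X Y Z in
  let ez := Efz c A t X Y Z in
  let bx := Bfx A t X Y Z in let by_ := Bfy A t X Y Z in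
  let bz := Bfz A t X Y Z in
  [/\ is_derive t 1 px (q * ex + q * ((PY / D) * bz - (PZ / D) * by_)),
      is_derive t 1 py (q * ey + q * ((PZ / D) * bx - (PX / D) * bz)) &
      is_derive t 1 pz (q * ez + q * ((PX / D) * by_ - (PY / D) * bx))] /\
  [/\ is_derive t 1 x (c * PX / D),
      is_derive t 1 y (c * PY / D) &
      is_derive t 1 z (c * PZ / D)].

Definition system_at {R : realType} (c m q : R) (A : potential R)
    (hx hy hz ux uy s : R -> R) (xi : R) : Prop :=
  let X := hx xi in let Y := hy xi in let Z := hz xi in
  let UX := ux xi in let UY := uy xi in let S := s xi in
  let T := (xi + Z) / c in
  let ex := Efx c A T X Y Z in let ey := Efy c A T X Y Z in
  let ez := Efz c A T X Y Z in
  let bx := Bfx A T X Y Z in let by_ := Bfy A T X Y Z in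
  let bz := Bfz A T X Y Z in
  let g := (1 + (UX ^+ 2 + UY ^+ 2) + S ^+ 2) / (2 * S) in
  let UZ := g - S in
  [/\ is_derive xi 1 hx (UX / S),
      is_derive xi 1 hy (UY / S) &
      is_derive xi 1 hz ((1 + (UX ^+ 2 + UY ^+ 2)) / (2 * S ^+ 2) - 2^-1)] /\
  [/\ is_derive xi 1 ux (q / (m * c ^+ 2 * S) * (g * ex + (UY * bz - UZ * by_))),
      is_derive xi 1 uy (q / (m * c ^+ 2 * S) * (g * ey + (UZ * bx - UX * bz))) &
      is_derive xi 1 s (q / (m * c ^+ 2) *
                          ((UX * ex + UY * ey) / S - ez - (UX * by_ - UY * bx) / S))].

Definition hev {R : realType} (c xi x1 x2 x3 : R) : 'rV[R]_4 :=
  ev ((xi + x3) / c) x1 x2 x3.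

Definition uH1 {R : realType} (c m q : R) (A : potential R) (xi x1 x2 x3 P1 : R) : R :=
  (P1 - q * Ax A (hev c xi x1 x2 x3)) / (m * c ^+ 2).
Definition uH2 {R : realType} (c m q : R) (A : potential R) (xi x1 x2 x3 P2 : R) : R :=
  (P2 - q * Ay A (hev c xi x1 x2 x3)) / (m * c ^+ 2).
Definition sH {R : realType} (c m q : R) (A : potential R) (xi x1 x2 x3 P3 : R) : R :=
  - (P3 + q * (A0 A (hev c xi x1 x2 x3) - Az A (hev c xi x1 x2 x3))) / (m * c ^+ 2).

Definition Hhat {R : realType} (c m q : R) (A : potential R)
    (xi x1 x2 x3 P1 P2 P3 : R) : R :=
  let u1 := uH1 c m q A xi x1 x2 x3 P1 in
  let u2 := uH2 c m q A xi x1 x2 x3 P2 in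
  let s := sH c m q A xi x1 x2 x3 P3 in
  m * c ^+ 2 * ((1 + s ^+ 2 + (u1 ^+ 2 + u2 ^+ 2)) / (2 * s))
  + q * A0 A (hev c xi x1 x2 x3).

Definition hamilton_at {R : realType} (c m q : R) (A : potential R)
    (hx hy hz P1 P2 P3 : R -> R) (xi : R) : Prop :=
  let H := Hhat c m q A xi in
  let a1 := hx xi in let a2 := hy xi in let a3 := hz xi in
  let b1 := P1 xi in let b2 := P2 xi in let b3 := P3 xi in
  [/\ is_derive xi 1 hx (derive1 (fun w => H a1 a2 a3 w b2 b3) b1),
      is_derive xi 1 hy (derive1 (fun w => H a1 a2 a3 b1 w b3) b2) &
      is_derive xi 1 hz (derive1 (fun w => H a1 a2 a3 b1 b2 w) b3)] /\
  [/\ is_derive xi 1 P1 (- derive1 (fun w => H w a2 a3 b1 b2 b3) a1),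
      is_derive xi 1 P2 (- derive1 (fun w => H a1 w a3 b1 b2 b3) a2) &
      is_derive xi 1 P3 (- derive1 (fun w => H a1 a2 w b1 b2 b3) a3)].

From HB Require Import structures.
From mathcomp Require Import all_boot all_order all_algebra.
From mathcomp Require Import all_classical all_reals all_analysis.
From mathcomp Require Import ring lra.
Import Order.TTheory GRing.Theory Num.Theory.
Import numFieldNormedType.Exports.
Local Open Scope classical_set_scope.
Local Open Scope ring_scope.
Set Implicit Arguments. Unset Strict Implicit. Unset Printing Implicit Defensive.

(* Write p = m c u and s = gamma - u3.  On the mass shell gamma = (1 + |u_perp|^2 + s^2) / (2 s),
   so (u_perp, s) are coordinates on momentum space, and along a motion
   dt/dxi = (1 + z') / c = gamma / (c s) with z' = u3 / s.

   Since Pi = (m c^2 u_perp + q A_perp, - m c^2 s - q (A0 - Az)) and H = m c^2 gamma + q A0, the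
   chain rule shows that dH/dPi is the velocity x' = (u_perp / s, z') and that
   - dH/dx - q dA_perp/dxi = q ((1 + z') E + x' /\ B)_perp, the Lorentz force in light-cone time.
   Along Hamilton's flow the Pi- and x-contributions to dH/dxi cancel.

   For the equations of motion, tau t = c t - z t and sigma xi = (xi + hz xi) / c are mutually
   inverse; whichever system is assumed makes one of them differentiable with nonzero
   derivative, the inverse function theorem gives the other, and each equation transforms by
   the factor dt/dxi. *)

Section PointwiseDerivatives.
Context {R : realType}.
Implicit Types (f g : R -> R) (x k df dg : R).

Lemma is_derive_add f g x df dg : is_derive x 1 f df -> is_derive x 1 g dg ->
  is_derive x 1 (fun w => f w + g w) (df + dg).
Proof. exact: is_deriveD. Qed.

Lemma is_derive_opp f x df : is_derive x 1 f df -> is_derive x 1 (fun w => - f w) (- df).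
Proof. exact: is_deriveN. Qed.

Lemma is_derive_sub f g x df dg : is_derive x 1 f df -> is_derive x 1 g dg ->
  is_derive x 1 (fun w => f w - g w) (df - dg).
Proof. exact: is_deriveB. Qed.

Lemma is_derive_mul f g x df dg : is_derive x 1 f df -> is_derive x 1 g dg ->
  is_derive x 1 (fun w => f w * g w) (f x * dg + g x * df).
Proof. exact: is_deriveM. Qed.

Lemma is_derive_const k x : is_derive x 1 (fun _ : R => k) 0.
Proof. exact: is_derive_cst. Qed.

Lemma is_derive_mulr k f x df : is_derive x 1 f df ->
  is_derive x 1 (fun w => k * f w) (k * df).
Proof.
move=> h; apply: is_derive_eq (is_derive_mul (is_derive_const k x) h) _.
by rewrite mulr0 addr0.
Qed.

Lemma is_derive_divr k f x df : is_derive x 1 f df ->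
  is_derive x 1 (fun w => f w / k) (df / k).
Proof.
move=> h; apply: is_derive_eq (is_derive_mul h (is_derive_const k^-1 x)) _.
by rewrite mulr0 add0r mulrC.
Qed.

Lemma is_derive_sqr f x df : is_derive x 1 f df ->
  is_derive x 1 (fun w => f w ^+ 2) (2 * f x * df).
Proof. by move=> h; apply: is_derive_eq (is_derive_mul h h) _; ring. Qed.

Lemma is_derive_inv f x df : is_derive x 1 f df -> f x != 0 ->
  is_derive x 1 (fun w => (f w)^-1) (- (f x) ^- 2 * df).
Proof. by move=> h f0; exact: is_deriveV. Qed.

Lemma is_derive_sqrt f x df : is_derive x 1 f df -> 0 < f x ->
  is_derive x 1 (fun w => Num.sqrt (f w)) ((2 * Num.sqrt (f x))^-1 * df).
Proof. by move=> h f0; exact: (is_derive1_comp (is_derive1_sqrt f0) h). Qed.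

Lemma is_derive_ext f g x df : is_derive x 1 f df -> f =1 g -> is_derive x 1 g df.
Proof. by move=> + /funext <-. Qed.

Lemma is_derive_comp_on (J : set R) (F f g : R -> R) x df dg :
  open J -> J x -> (forall y, J y -> F y = f (g y)) ->
  is_derive (g x) 1 f df -> is_derive x 1 g dg -> is_derive x 1 F (df * dg).
Proof.
move=> oJ Jx FE hf hg; apply: near_eq_is_derive (is_derive1_comp hf hg).
by near=> y; rewrite /= FE //; near: y; exact: open_nbhs_nbhs.
Unshelve. all: by end_near.
Qed.

Lemma is_derive_continuous f x df : is_derive x 1 f df -> {for x, continuous f}.
Proof. by case=> /derivable1_diffP/differentiable_continuous. Qed.

End PointwiseDerivatives.

Section ChainRuleSpacetime.
Context {R : realType}.

Lemma is_derive_ev (a b c d : R -> R) (w0 da db dc dd : R) :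
  is_derive w0 1 a da -> is_derive w0 1 b db -> is_derive w0 1 c dc -> is_derive w0 1 d dd ->
  is_derive w0 1 (fun w => ev (a w) (b w) (c w) (d w)) (ev da db dc dd).
Proof.
move=> ha hb hc hd.
have dv : derivable (fun w => ev (a w) (b w) (c w) (d w)) w0 1.
  apply/derivable_mxP => i j; rewrite /ev; under eq_fun do rewrite mxE.
  by case: j => [[|[|[|[|j]]]] hj] //=; [case: ha | case: hb | case: hc | case: hd].
apply: DeriveDef => //; rewrite derive_mx //; apply/matrixP => i j; rewrite !mxE.
under eq_fun do rewrite mxE.
by case: j => [[|[|[|[|j]]]] hj] //=; exact: derive_val.
Qed.

Lemma is_derive_diff_comp (f : 'rV[R]_4 -> R) (C : R -> 'rV[R]_4) (w0 : R) dC :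
  differentiable f (C w0) -> is_derive w0 1 C dC ->
  is_derive w0 1 (fun w => f (C w)) ('d f (C w0) dC).
Proof.
move=> df [/derivable1_diffP dCw0 <-].
have dfC : differentiable (f \o C) w0 by exact: differentiable_comp.
apply: DeriveDef; first exact: diff_derivable.
by rewrite (deriveE _ dfC) diff_comp //= (deriveE _ dCw0).
Qed.

Lemma partials_diff (f : 'rV[R]_4 -> R) t x y z : differentiable f (ev t x y z) ->
  [/\ d_t f t x y z = 'd f (ev t x y z) (ev 1 0 0 0),
      d_x f t x y z = 'd f (ev t x y z) (ev 0 1 0 0),
      d_y f t x y z = 'd f (ev t x y z) (ev 0 0 1 0) &
      d_z f t x y z = 'd f (ev t x y z) (ev 0 0 0 1)].
Proof.
move=> df.
by split; rewrite /d_t /d_x /d_y /d_z derive1E; apply: derive_val;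
  apply: is_derive_diff_comp => //; apply: is_derive_ev.
Qed.

Lemma ev_basis (a b c d : R) :
  ev a b c d = a *: ev 1 0 0 0 + b *: ev 0 1 0 0 + c *: ev 0 0 1 0 + d *: ev 0 0 0 1.
Proof. by apply/rowP => -[[|[|[|[|j]]]] hj] //; rewrite !mxE /=; ring. Qed.

Lemma is_derive_ev_comp (f : 'rV[R]_4 -> R) (a b c d : R -> R) (w0 da db dc dd : R) :
  differentiable f (ev (a w0) (b w0) (c w0) (d w0)) ->
  is_derive w0 1 a da -> is_derive w0 1 b db -> is_derive w0 1 c dc -> is_derive w0 1 d dd ->
  is_derive w0 1 (fun w => f (ev (a w) (b w) (c w) (d w)))
    (da * d_t f (a w0) (b w0) (c w0) (d w0) + db * d_x f (a w0) (b w0) (c w0) (d w0)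
     + dc * d_y f (a w0) (b w0) (c w0) (d w0) + dd * d_z f (a w0) (b w0) (c w0) (d w0)).
Proof.
move=> df ha hb hc hd; have [-> -> -> ->] := partials_diff df.
rewrite -!linearZ -!linearD -ev_basis.
exact: is_derive_diff_comp (is_derive_ev ha hb hc hd).
Qed.

End ChainRuleSpacetime.

(* The light-cone gamma and z' = u3 / s as functions of (u_perp, s). *)
Definition lc_gamma {R : realType} (u1 u2 s : R) : R :=
  (1 + (u1 ^+ 2 + u2 ^+ 2) + s ^+ 2) / (2 * s).
Definition lc_vz {R : realType} (u1 u2 s : R) : R :=
  (1 + (u1 ^+ 2 + u2 ^+ 2)) / (2 * s ^+ 2) - 2^-1.

Section LightConeKinematics.
Context {R : realType}.

Lemma lc_gamma_gt0 (u1 u2 s : R) : 0 < s -> 0 < lc_gamma u1 u2 s.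
Proof.
move=> s0; apply: divr_gt0; last by rewrite mulr_gt0.
by rewrite ltr_pwDl ?sqr_ge0 // ltr_pwDl ?addr_ge0 ?sqr_ge0.
Qed.

Lemma is_derive_lc_gamma (u1 u2 s : R -> R) (x du1 du2 ds : R) :
  is_derive x 1 u1 du1 -> is_derive x 1 u2 du2 -> is_derive x 1 s ds -> s x != 0 ->
  is_derive x 1 (fun w => lc_gamma (u1 w) (u2 w) (s w))
    (u1 x / s x * du1 + u2 x / s x * du2 - lc_vz (u1 x) (u2 x) (s x) * ds).
Proof.
move=> h1 h2 hs s0.
have num := is_derive_add (is_derive_add (is_derive_const 1 x)
  (is_derive_add (is_derive_sqr h1) (is_derive_sqr h2))) (is_derive_sqr hs).
have s20 : 2 * s x != 0 by rewrite mulf_neq0.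
have den := is_derive_inv (is_derive_mulr 2 hs) s20.
apply: is_derive_eq (is_derive_mul num den) _.
by rewrite /lc_vz; field; rewrite s0.
Qed.

Lemma momentum_lightcone (k p1 p2 p3 : R) : 0 < k ->
  let g0 := Num.sqrt (1 + (p1 ^+ 2 + p2 ^+ 2 + p3 ^+ 2) / k ^+ 2) in
  let s := g0 - p3 / k in
  [/\ 0 < s, g0 = lc_gamma (p1 / k) (p2 / k) s,
      p3 = k * (lc_gamma (p1 / k) (p2 / k) s - s) &
      Num.sqrt (k ^+ 2 + (p1 ^+ 2 + p2 ^+ 2 + p3 ^+ 2)) = k * g0].
Proof.
move=> k0 g0 s.
have k2 : 0 < k ^+ 2 by rewrite exprn_gt0.
have W0 : 0 <= p1 ^+ 2 + p2 ^+ 2 + p3 ^+ 2 by rewrite !addr_ge0 ?sqr_ge0.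
have g0_ge0 : 0 <= g0 by rewrite sqrtr_ge0.
have g0E : g0 ^+ 2 = 1 + ((p1 / k) ^+ 2 + (p2 / k) ^+ 2) + (p3 / k) ^+ 2.
  rewrite sqr_sqrtr; first by field; rewrite gt_eqF.
  by rewrite addr_ge0 // divr_ge0 // ltW.
have s0 : 0 < s.
  rewrite /s subr_gt0; move: g0_ge0 g0E; clearbody g0.
  move: (p1 / k) (p2 / k) (p3 / k) => a b d g0_ge0 g0E.
  have := sqr_ge0 a; have := sqr_ge0 b; nra.
have gE : g0 = lc_gamma (p1 / k) (p2 / k) s.
  have s2 : 2 * s != 0 by rewrite mulf_neq0 // gt_eqF.
  rewrite /lc_gamma; have -> : 1 + ((p1 / k) ^+ 2 + (p2 / k) ^+ 2) + s ^+ 2 = g0 * (2 * s).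
    by rewrite /s; lra.
  by rewrite mulfK.
split => //; first by rewrite -gE /s; field; rewrite gt_eqF.
have -> : k ^+ 2 + (p1 ^+ 2 + p2 ^+ 2 + p3 ^+ 2) = (k * g0) ^+ 2.
  by rewrite exprMn g0E; field; rewrite gt_eqF.
by rewrite sqrtr_sqr ger0_norm // mulr_ge0 // ltW.
Qed.

End LightConeKinematics.

(* With p = m c (u1, u2, gamma - s), each right-hand side of the equations of motion, times
   dt/dxi, is the matching right-hand side of the light-cone system. *)
Section LightConeAlgebra.
Context {R : realType}.
Variables (c m q u1 u2 s ex ey ez bx by_ bz : R).
Hypotheses (c0 : 0 < c) (m0 : 0 < m) (s0 : 0 < s).
Let k := m * c.
Let g := lc_gamma u1 u2 s.
Let u3 := g - s.
Let ell := (1 + lc_vz u1 u2 s) / c. (* dt/dxi *)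
Let Fx := q * ex + q * ((k * u2) / (k * g) * bz - (k * u3) / (k * g) * by_).
Let Fy := q * ey + q * ((k * u3) / (k * g) * bx - (k * u1) / (k * g) * bz).
Let Fz := q * ez + q * ((k * u1) / (k * g) * by_ - (k * u2) / (k * g) * bx).
Let Su1 := q / (m * c ^+ 2 * s) * (g * ex + (u2 * bz - u3 * by_)).
Let Su2 := q / (m * c ^+ 2 * s) * (g * ey + (u3 * bx - u1 * bz)).
Let Ss := q / (m * c ^+ 2) * ((u1 * ex + u2 * ey) / s - ez - (u1 * by_ - u2 * bx) / s).

Let num_neq0 : 1 + (u1 ^+ 2 + u2 ^+ 2) + s ^+ 2 != 0.
Proof. by rewrite gt_eqF // ltr_pwDl ?sqr_ge0 // ltr_pwDl ?addr_ge0 ?sqr_ge0. Qed.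

Ltac lc_field := rewrite /lc_gamma /lc_vz; field;
  rewrite ?num_neq0 ?(gt_eqF c0) ?(gt_eqF m0) ?(gt_eqF s0) ?andbT //.

Lemma ell_gt0 : 0 < ell.
Proof.
rewrite /ell /lc_vz divr_gt0 //.
have hnum : 0 <= 1 + (u1 ^+ 2 + u2 ^+ 2) by rewrite !addr_ge0 ?sqr_ge0.
have : 0 <= (1 + (u1 ^+ 2 + u2 ^+ 2)) / (2 * s ^+ 2).
  by rewrite divr_ge0 // mulr_ge0 // sqr_ge0.
lra.
Qed.

Lemma time_dilation : (c - c * (k * u3) / (k * g))^-1 = ell.
Proof.
have g0 : g != 0 by rewrite lt0r_neq0 ?lc_gamma_gt0.
have -> : c - c * (k * u3) / (k * g) = c * s / g.
  by rewrite /u3 /k; field; rewrite g0 ?(gt_eqF c0) ?(gt_eqF m0).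
rewrite /ell /g; lc_field.
Qed.

Lemma velocity_x : c * (k * u1) / (k * g) * ell = u1 / s.
Proof. rewrite /ell /g /k; lc_field. Qed.

Lemma velocity_y : c * (k * u2) / (k * g) * ell = u2 / s.
Proof. rewrite /ell /g /k; lc_field. Qed.

Lemma velocity_z : c * (k * u3) / (k * g) * ell = lc_vz u1 u2 s.
Proof. rewrite /ell /u3 /g /k; lc_field. Qed.

Lemma lorentz_u1 : Fx / k * ell = Su1.
Proof. rewrite /Fx /Su1 /ell /u3 /g /k; lc_field. Qed.

Lemma lorentz_u2 : Fy / k * ell = Su2.
Proof. rewrite /Fy /Su2 /ell /u3 /g /k; lc_field. Qed.

(* The right-hand side is the xi-derivative of u3 = gamma - s. *)
Lemma lorentz_u3 : Fz / k * ell = u1 / s * Su1 + u2 / s * Su2 - lc_vz u1 u2 s * Ss - Ss.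
Proof. rewrite /Fz /Su1 /Su2 /Ss /ell /u3 /g /k; lc_field. Qed.

(* The left-hand side is the t-derivative of sqrt (1 + |p|^2 / k^2) - pz / k, with the square
   root already replaced by gamma. *)
Lemma lorentz_s :
  ((2 * g)^-1 * (0 + (2 * (k * u1) * Fx + 2 * (k * u2) * Fy + 2 * (k * u3) * Fz) / k ^+ 2)
   - Fz / k) * ell = Ss.
Proof. rewrite /Fx /Fy /Fz /Ss /ell /u3 /g /k; lc_field. Qed.

End LightConeAlgebra.

(* Differential of (xi, x) |-> F ((xi + x3) / c, x): the time slot moves with xi and x3. *)
Definition hat_diff {R : realType} (F : 'rV[R]_4 -> R) (c xi x1 x2 x3 dxi d1 d2 d3 : R) : R :=
  let t := (xi + x3) / c in
  (dxi + d3) / c * d_t F t x1 x2 x3 + d1 * d_x F t x1 x2 x3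
  + d2 * d_y F t x1 x2 x3 + d3 * d_z F t x1 x2 x3.

Lemma is_derive_hat {R : realType} (F : 'rV[R]_4 -> R) (c : R) (W X1 X2 X3 : R -> R)
    (w0 dW d1 d2 d3 : R) : (forall e, differentiable F e) ->
  is_derive w0 1 W dW -> is_derive w0 1 X1 d1 -> is_derive w0 1 X2 d2 ->
  is_derive w0 1 X3 d3 ->
  is_derive w0 1 (fun w => F (hev c (W w) (X1 w) (X2 w) (X3 w)))
    (hat_diff F c (W w0) (X1 w0) (X2 w0) (X3 w0) dW d1 d2 d3).
Proof.
move=> dF hW h1 h2 h3; rewrite /hev /hat_diff.
exact: is_derive_ev_comp (is_derive_divr c (is_derive_add hW h3)) h1 h2 h3.
Qed.

Section Hamiltonian.
Context {R : realType}.
Variables (c m q : R) (A : potential R).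
Hypotheses (c0 : c != 0) (m0 : m != 0) (hA : pot_differentiable A).

Let k := m * c ^+ 2.
Let k0 : k != 0. Proof. by rewrite mulf_neq0 // expf_neq0. Qed.
Let dA0 e : differentiable (A0 A) e. Proof. by case: (hA e). Qed.
Let dAx e : differentiable (Ax A) e. Proof. by case: (hA e). Qed.
Let dAy e : differentiable (Ay A) e. Proof. by case: (hA e). Qed.
Let dAz e : differentiable (Az A) e. Proof. by case: (hA e). Qed.

(* Differential of Hhat at (xi, x, Pi) in the direction (dxi, dx, dPi); its dPi-coefficients are
   the light-cone velocities. *)
Definition Hhat_diff (xi x1 x2 x3 P1 P2 P3 dxi d1 d2 d3 e1 e2 e3 : R) : R :=
  let u1 := uH1 c m q A xi x1 x2 x3 P1 in
  let u2 := uH2 c m q A xi x1 x2 x3 P2 in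
  let s := sH c m q A xi x1 x2 x3 P3 in
  let vz := lc_vz u1 u2 s in
  let dA F := hat_diff F c xi x1 x2 x3 dxi d1 d2 d3 in
  u1 / s * e1 + u2 / s * e2 + vz * e3
  + q * ((1 + vz) * dA (A0 A) - u1 / s * dA (Ax A) - u2 / s * dA (Ay A) - vz * dA (Az A)).

Section Curve.
Variables (W X1 X2 X3 P1 P2 P3 : R -> R) (w0 dW d1 d2 d3 e1 e2 e3 : R).
Hypotheses (hW : is_derive w0 1 W dW) (h1 : is_derive w0 1 X1 d1)
  (h2 : is_derive w0 1 X2 d2) (h3 : is_derive w0 1 X3 d3)
  (g1 : is_derive w0 1 P1 e1) (g2 : is_derive w0 1 P2 e2) (g3 : is_derive w0 1 P3 e3).

Let dA F := hat_diff F c (W w0) (X1 w0) (X2 w0) (X3 w0) dW d1 d2 d3.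
Let hat F : (forall e, differentiable F e) ->
  is_derive w0 1 (fun w => F (hev c (W w) (X1 w) (X2 w) (X3 w))) (dA F).
Proof. by move=> dF; exact: is_derive_hat. Qed.

Lemma is_derive_uH_curve :
  [/\ is_derive w0 1 (fun w => uH1 c m q A (W w) (X1 w) (X2 w) (X3 w) (P1 w))
        ((e1 - q * dA (Ax A)) / k),
      is_derive w0 1 (fun w => uH2 c m q A (W w) (X1 w) (X2 w) (X3 w) (P2 w))
        ((e2 - q * dA (Ay A)) / k) &
      is_derive w0 1 (fun w => sH c m q A (W w) (X1 w) (X2 w) (X3 w) (P3 w))
        (- (e3 + q * (dA (A0 A) - dA (Az A))) / k)].
Proof.
split; apply: is_derive_divr.
- exact: is_derive_sub g1 (is_derive_mulr q (hat dAx)).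
- exact: is_derive_sub g2 (is_derive_mulr q (hat dAy)).
- exact: is_derive_opp (is_derive_add g3 (is_derive_mulr q (is_derive_sub (hat dA0) (hat dAz)))).
Qed.

Lemma is_derive_Hhat_curve :
  sH c m q A (W w0) (X1 w0) (X2 w0) (X3 w0) (P3 w0) != 0 ->
  is_derive w0 1 (fun w => Hhat c m q A (W w) (X1 w) (X2 w) (X3 w) (P1 w) (P2 w) (P3 w))
    (Hhat_diff (W w0) (X1 w0) (X2 w0) (X3 w0) (P1 w0) (P2 w0) (P3 w0) dW d1 d2 d3 e1 e2 e3).
Proof.
move=> s0; have [hu1 hu2 hs] := is_derive_uH_curve.
have hg := is_derive_lc_gamma hu1 hu2 hs s0.
have hH := is_derive_add (is_derive_mulr k hg) (is_derive_mulr q (hat dA0)).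
apply: is_derive_eq (is_derive_ext hH _) _.
  by move=> w; rewrite /Hhat /lc_gamma /=; congr (_ * (_ / _) + _); ring.
by rewrite /Hhat_diff /k /dA /=; field; rewrite s0 m0 c0.
Qed.

Lemma derive1_Hhat_curve :
  sH c m q A (W w0) (X1 w0) (X2 w0) (X3 w0) (P3 w0) != 0 ->
  derive1 (fun w => Hhat c m q A (W w) (X1 w) (X2 w) (X3 w) (P1 w) (P2 w) (P3 w)) w0 =
  Hhat_diff (W w0) (X1 w0) (X2 w0) (X3 w0) (P1 w0) (P2 w0) (P3 w0) dW d1 d2 d3 e1 e2 e3.
Proof. by move=> s0; rewrite derive1E; apply: derive_val; exact: is_derive_Hhat_curve. Qed.

End Curve.

Section Point.
Variables (xi a1 a2 a3 b1 b2 b3 : R).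
Hypothesis s0 : sH c m q A xi a1 a2 a3 b3 != 0.
Let u1 := uH1 c m q A xi a1 a2 a3 b1.
Let u2 := uH2 c m q A xi a1 a2 a3 b2.
Let s := sH c m q A xi a1 a2 a3 b3.
Let H' := Hhat_diff xi a1 a2 a3 b1 b2 b3.

Ltac slice_curve := by [exact: is_derive_id | exact: is_derive_const].

Lemma derive1_Hhat_dxi :
  derive1 (fun w => Hhat c m q A w a1 a2 a3 b1 b2 b3) xi = H' 1 0 0 0 0 0 0.
Proof. by rewrite derive1_Hhat_curve //; slice_curve. Qed.

Lemma derive1_Hhat_dx :
  [/\ derive1 (fun w => Hhat c m q A xi w a2 a3 b1 b2 b3) a1 = H' 0 1 0 0 0 0 0,
      derive1 (fun w => Hhat c m q A xi a1 w a3 b1 b2 b3) a2 = H' 0 0 1 0 0 0 0 &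
      derive1 (fun w => Hhat c m q A xi a1 a2 w b1 b2 b3) a3 = H' 0 0 0 1 0 0 0].
Proof. by split; rewrite derive1_Hhat_curve //; slice_curve. Qed.

Lemma derive1_Hhat_dPi :
  [/\ derive1 (fun w => Hhat c m q A xi a1 a2 a3 w b2 b3) b1 = u1 / s,
      derive1 (fun w => Hhat c m q A xi a1 a2 a3 b1 w b3) b2 = u2 / s &
      derive1 (fun w => Hhat c m q A xi a1 a2 a3 b1 b2 w) b3 = lc_vz u1 u2 s].
Proof.
by split; rewrite derive1_Hhat_curve //; try slice_curve;
  rewrite /Hhat_diff /hat_diff /u1 /u2 /s /=; ring.
Qed.

Let vz := lc_vz u1 u2 s.
Let T := (xi + a3) / c.
Let dA F := hat_diff F c xi a1 a2 a3 1 (u1 / s) (u2 / s) vz.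

(* Along Hamilton's flow the Pi- and x-contributions cancel. *)
Lemma Hhat_diff_hamilton_flow :
  H' 1 (u1 / s) (u2 / s) vz (- H' 0 1 0 0 0 0 0) (- H' 0 0 1 0 0 0 0) (- H' 0 0 0 1 0 0 0)
  = H' 1 0 0 0 0 0 0.
Proof. rewrite /H' /Hhat_diff /hat_diff /u1 /u2 /s /vz /=; ring. Qed.

Let Ex := Efx c A T a1 a2 a3.
Let Ey := Efy c A T a1 a2 a3.
Let Ez := Efz c A T a1 a2 a3.
Let Bx := Bfx A T a1 a2 a3.
Let By := Bfy A T a1 a2 a3.
Let Bz := Bfz A T a1 a2 a3.

Lemma hamilton_lorentz :
  [/\ - H' 0 1 0 0 0 0 0 = q * ((1 + vz) * Ex + (u2 / s * Bz - vz * By)) + q * dA (Ax A),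
      - H' 0 0 1 0 0 0 0 = q * ((1 + vz) * Ey + (vz * Bx - u1 / s * Bz)) + q * dA (Ay A) &
      - H' 0 0 0 1 0 0 0 = - q * (u1 / s * Ex + u2 / s * Ey - Ez - (u1 / s * By - u2 / s * Bx))
                          - q * (dA (A0 A) - dA (Az A))].
Proof.
by split; rewrite /H' /dA /Hhat_diff /hat_diff /vz /T /Ex /Ey /Ez /Bx /By /Bz
  /Efx /Efy /Efz /Bfx /Bfy /Bfz /u1 /u2 /s /=; ring.
Qed.

End Point.

Lemma Pi_of_uH (xi a1 a2 a3 b1 b2 b3 : R) :
  [/\ k * uH1 c m q A xi a1 a2 a3 b1 + q * Ax A (hev c xi a1 a2 a3) = b1,
      k * uH2 c m q A xi a1 a2 a3 b2 + q * Ay A (hev c xi a1 a2 a3) = b2 &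
      - (k * sH c m q A xi a1 a2 a3 b3) - q * (A0 A (hev c xi a1 a2 a3) - Az A (hev c xi a1 a2 a3))
      = b3].
Proof. by split; rewrite /uH1 /uH2 /sH /k; field; rewrite m0 c0. Qed.

Lemma hamilton_at_iff_system_at (hx hy hz P1 P2 P3 : R -> R) (xi : R) :
  sH c m q A xi (hx xi) (hy xi) (hz xi) (P3 xi) != 0 ->
  hamilton_at c m q A hx hy hz P1 P2 P3 xi <->
  system_at c m q A hx hy hz (fun w => uH1 c m q A w (hx w) (hy w) (hz w) (P1 w))
    (fun w => uH2 c m q A w (hx w) (hy w) (hz w) (P2 w))
    (fun w => sH c m q A w (hx w) (hy w) (hz w) (P3 w)) xi.
Proof.
move=> s0; rewrite /hamilton_at /system_at /=.
have [-> -> ->] := derive1_Hhat_dPi (P1 xi) (P2 xi) s0.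
have [-> -> ->] := derive1_Hhat_dx (P1 xi) (P2 xi) s0.
have [L1 L2 L3] := hamilton_lorentz xi (hx xi) (hy xi) (hz xi) (P1 xi) (P2 xi) (P3 xi).
have hxi : is_derive xi 1 (fun w => w) 1 := is_derive_id xi 1.
split=> -[[hX hY hZ] [h1 h2 h3]]; (split; first by split).
- have [hu1 hu2 hs] := is_derive_uH_curve hxi hX hY hZ h1 h2 h3.
  rewrite /= in hu1 hu2 hs; split.
  + by apply: is_derive_eq hu1 _; rewrite L1 /k /lc_vz; field; rewrite s0 m0 c0.
  + by apply: is_derive_eq hu2 _; rewrite L2 /k /lc_vz; field; rewrite s0 m0 c0.
  + by apply: is_derive_eq hs _; rewrite L3 /k; field; rewrite s0 m0 c0.
- have hat F : (forall e, differentiable F e) ->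
      is_derive xi 1 (fun w => F (hev c w (hx w) (hy w) (hz w)))
        (hat_diff F c xi (hx xi) (hy xi) (hz xi) 1 _ _ _) :=
    fun dF => is_derive_hat c dF hxi hX hY hZ.
  have Pi w := Pi_of_uH w (hx w) (hy w) (hz w) (P1 w) (P2 w) (P3 w).
  split.
  + have hP := is_derive_add (is_derive_mulr k h1) (is_derive_mulr q (hat _ dAx)).
    apply: is_derive_eq (is_derive_ext hP _) _; first by move=> w /=; case: (Pi w).
    by rewrite L1 /k /lc_vz; field; rewrite s0 m0 c0.
  + have hP := is_derive_add (is_derive_mulr k h2) (is_derive_mulr q (hat _ dAy)).
    apply: is_derive_eq (is_derive_ext hP _) _; first by move=> w /=; case: (Pi w).
    by rewrite L2 /k /lc_vz; field; rewrite s0 m0 c0.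
  + have hP := is_derive_sub (is_derive_opp (is_derive_mulr k h3))
      (is_derive_mulr q (is_derive_sub (hat _ dA0) (hat _ dAz))).
    apply: is_derive_eq (is_derive_ext hP _) _; first by move=> w /=; case: (Pi w).
    by rewrite L3 /k; field; rewrite s0 m0 c0.
Qed.

Lemma hamilton_at_energy (hx hy hz P1 P2 P3 : R -> R) (xi : R) :
  sH c m q A xi (hx xi) (hy xi) (hz xi) (P3 xi) != 0 ->
  hamilton_at c m q A hx hy hz P1 P2 P3 xi ->
  is_derive xi 1 (fun w => Hhat c m q A w (hx w) (hy w) (hz w) (P1 w) (P2 w) (P3 w))
    (derive1 (fun w => Hhat c m q A w (hx xi) (hy xi) (hz xi) (P1 xi) (P2 xi) (P3 xi)) xi).
Proof.
move=> s0; rewrite /hamilton_at /=.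
have [-> -> ->] := derive1_Hhat_dPi (P1 xi) (P2 xi) s0.
have [-> -> ->] := derive1_Hhat_dx (P1 xi) (P2 xi) s0.
case=> -[hX hY hZ] [h1 h2 h3].
apply: is_derive_eq (is_derive_Hhat_curve (is_derive_id xi 1) hX hY hZ h1 h2 h3 s0) _.
by rewrite derive1_Hhat_dxi //; exact: Hhat_diff_hamilton_flow.
Qed.

End Hamiltonian.

Section LightConeTime.
Context {R : realType}.
Variables (c m q : R) (A : potential R).
Hypotheses (c0 : 0 < c) (m0 : 0 < m).
Variables (I J : set R) (x y z px py pz hx hy hz ux uy s : R -> R).
Hypotheses (oI : open I) (oJ : open J) (IJ : (fun t => c * t - z t) @` I = J).
Hypothesis hrel : forall t, I t ->
  let xi := c * t - z t in
  let u2 := (px t ^+ 2 + py t ^+ 2 + pz t ^+ 2) / (m * c) ^+ 2 in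
  [/\ hx xi = x t, hy xi = y t & hz xi = z t] /\
  [/\ ux xi = px t / (m * c), uy xi = py t / (m * c) &
      s xi = Num.sqrt (1 + u2) - pz t / (m * c)].

Local Notation k := (m * c).
Local Notation tau t := (c * t - z t).
Local Notation sigma xi := ((xi + hz xi) / c).
Local Notation D t := (Num.sqrt (m ^+ 2 * c ^+ 2 + (px t ^+ 2 + py t ^+ 2 + pz t ^+ 2))).
Local Notation ell xi := ((1 + lc_vz (ux xi) (uy xi) (s xi)) / c).

Lemma sigma_tau t : I t -> sigma (tau t) = t.
Proof.
move=> It; have [[_ _ ->] _] := hrel It.
by field; rewrite gt_eqF.
Qed.

Lemma tau_sigma xi : J xi -> I (sigma xi) /\ tau (sigma xi) = xi.
Proof. by rewrite -IJ => -[t It <-]; rewrite sigma_tau. Qed.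

Lemma hrel_sigma xi : J xi ->
  [/\ hx xi = x (sigma xi), hy xi = y (sigma xi) & hz xi = z (sigma xi)] /\
  [/\ ux xi = px (sigma xi) / k, uy xi = py (sigma xi) / k &
      s xi = Num.sqrt (1 + (px (sigma xi) ^+ 2 + py (sigma xi) ^+ 2 + pz (sigma xi) ^+ 2) / k ^+ 2)
             - pz (sigma xi) / k].
Proof. by case/tau_sigma => It e; move: (hrel It); rewrite /= e. Qed.

Lemma lightcone_at t : I t ->
  let g := lc_gamma (ux (tau t)) (uy (tau t)) (s (tau t)) in
  [/\ 0 < s (tau t), px t = k * ux (tau t), py t = k * uy (tau t) &
      pz t = k * (g - s (tau t))] /\
  Num.sqrt (1 + (px t ^+ 2 + py t ^+ 2 + pz t ^+ 2) / k ^+ 2) = g /\ D t = k * g.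
Proof.
move=> It g; have [_ [uxE uyE sE]] := hrel It.
have [] := momentum_lightcone (px t) (py t) (pz t) (mulr_gt0 m0 c0).
rewrite -uxE -uyE -sE -/g => s_gt0 gE pzE DE.
split; first by split => //; rewrite ?uxE ?uyE; field; rewrite ?(gt_eqF m0) ?(gt_eqF c0).
by split => //; rewrite -exprMn DE gE.
Qed.

Section Forward.
Hypothesis HE : forall t, I t -> EOM_at c m q A x y z px py pz t.

Lemma is_derive_tau t : I t -> is_derive t 1 (fun t => tau t) (c - c * pz t / D t).
Proof.
move=> It; have [_ [_ _ hzd]] := HE It.
have h := is_derive_sub (is_derive_mulr c (is_derive_id t 1)) hzd.
by apply: is_derive_eq h _; rewrite mulr1.
Qed.

Lemma is_derive_sigma_tau t : I t ->
  is_derive (tau t) 1 (fun xi => sigma xi) (c - c * pz t / D t)^-1.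
Proof.
move=> It; have [[S0 _ _ pzE] [_ DE]] := lightcone_at It.
apply: (is_derive_inverse (f := fun t => tau t)); last 2 first.
- exact: is_derive_tau.
- by rewrite DE pzE -invr_eq0 time_dilation // gt_eqF // ell_gt0.
- by near=> w; apply: sigma_tau; near: w; exact: open_nbhs_nbhs.
- near=> w; apply: is_derive_continuous (is_derive_tau _); near: w; exact: open_nbhs_nbhs.
Unshelve. all: by end_near.
Qed.

Lemma is_derive_hat_of_time (F f : R -> R) t df : I t ->
  (forall xi, J xi -> F xi = f (sigma xi)) -> is_derive t 1 f df ->
  is_derive (tau t) 1 F (df * (c - c * pz t / D t)^-1).
Proof.
move=> It FE hf; apply: is_derive_comp_on oJ _ FE _ (is_derive_sigma_tau It).
- by rewrite -IJ; exists t.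
- by rewrite sigma_tau.
Qed.

Lemma eom_to_system xi : J xi -> system_at c m q A hx hy hz ux uy s xi.
Proof.
rewrite -IJ => -[t It <-] /=.
have [[hpx hpy hpz] [hxd hyd hzd]] := HE It.
have [[S0 pxE pyE pzE] [gE DE]] := lightcone_at It.
have [[hxE hyE hzE] _] := hrel It.
rewrite /system_at /= hzE -/(lc_gamma (ux (tau t)) (uy (tau t)) (s (tau t))).
rewrite -/(lc_vz (ux (tau t)) (uy (tau t)) (s (tau t))) hxE hyE.
have -> : (c * t - z t + z t) / c = t by field; rewrite gt_eqF.
have pull := is_derive_hat_of_time It.
split; split.
- apply: is_derive_eq (pull _ _ _ _ hxd) _; first by move=> ? /hrel_sigma[[-> _ _] _].
  by rewrite DE pzE pxE time_dilation // velocity_x.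
- apply: is_derive_eq (pull _ _ _ _ hyd) _; first by move=> ? /hrel_sigma[[_ -> _] _].
  by rewrite DE pzE pyE time_dilation // velocity_y.
- apply: is_derive_eq (pull _ _ _ _ hzd) _; first by move=> ? /hrel_sigma[[_ _ e] _].
  by rewrite DE pzE time_dilation // velocity_z.
- apply: is_derive_eq (pull _ _ _ _ (is_derive_divr k hpx)) _.
    by move=> ? /hrel_sigma[_ [-> _ _]].
  by rewrite DE pzE pyE time_dilation // lorentz_u1.
- apply: is_derive_eq (pull _ _ _ _ (is_derive_divr k hpy)) _.
    by move=> ? /hrel_sigma[_ [_ -> _]].
  by rewrite DE pzE pxE time_dilation // lorentz_u2.
- have W0 : 0 < 1 + (px t ^+ 2 + py t ^+ 2 + pz t ^+ 2) / k ^+ 2.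
    by rewrite ltr_pwDl // divr_ge0 ?sqr_ge0 // !addr_ge0 ?sqr_ge0.
  have hW := is_derive_add (is_derive_const 1 t) (is_derive_divr (k ^+ 2)
    (is_derive_add (is_derive_add (is_derive_sqr hpx) (is_derive_sqr hpy)) (is_derive_sqr hpz))).
  have hs := is_derive_sub (is_derive_sqrt hW W0) (is_derive_divr k hpz).
  apply: is_derive_eq (pull _ _ _ _ hs) _; first by move=> ? /hrel_sigma[_ [_ _ ->]].
  by rewrite DE gE pzE pxE pyE time_dilation // lorentz_s.
Qed.

End Forward.

Section Backward.
Hypothesis HS : forall xi, J xi -> system_at c m q A hx hy hz ux uy s xi.

Lemma is_derive_sigma xi : J xi -> is_derive xi 1 (fun xi => sigma xi) (ell xi).
Proof.
move=> Jxi; have [[_ _ hzd] _] := HS Jxi.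
have h := is_derive_divr c (is_derive_add (is_derive_id xi 1) hzd).
by apply: is_derive_eq h _; rewrite /lc_vz.
Qed.

Lemma is_derive_tau_sigma t : I t -> is_derive t 1 (fun t => tau t) (ell (tau t))^-1.
Proof.
move=> It; have Jt : J (tau t) by rewrite -IJ; exists t.
have [[S0 _ _ _] _] := lightcone_at It.
suff : is_derive (sigma (tau t)) 1 (fun t => tau t) (ell (tau t))^-1 by rewrite sigma_tau.
apply: is_derive_inverse (is_derive_sigma Jt) _.
- by near=> xi; apply: (proj2 (tau_sigma _)); near: xi; exact: open_nbhs_nbhs.
- near=> xi; apply: is_derive_continuous (is_derive_sigma _); near: xi; exact: open_nbhs_nbhs.
- by rewrite gt_eqF // ell_gt0.
Unshelve. all: by end_near.
Qed.

Lemma is_derive_time_of_hat (F f : R -> R) t dF : I t ->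
  (forall t, I t -> f t = F (tau t)) -> is_derive (tau t) 1 F dF ->
  is_derive t 1 f (dF * (ell (tau t))^-1).
Proof. by move=> It fE hF; exact: is_derive_comp_on oI It fE hF (is_derive_tau_sigma It). Qed.

Lemma system_to_eom t : I t -> EOM_at c m q A x y z px py pz t.
Proof.
move=> It; have Jt : J (tau t) by rewrite -IJ; exists t.
have [[S0 pxE pyE pzE] [_ DE]] := lightcone_at It.
have [[hxE hyE hzE] _] := hrel It.
have ell0 : ell (tau t) != 0 by rewrite gt_eqF // ell_gt0.
have k0 : k != 0 by rewrite mulf_neq0 // gt_eqF.
have back a b : a * ell (tau t) = b -> b / ell (tau t) = a by move=> <-; rewrite mulfK.
have backk a b : a / k * ell (tau t) = b -> k * b / ell (tau t) = a.
  by move=> <-; rewrite mulrA mulfK // mulrC divfK.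
move: (HS Jt); rewrite /system_at /= hzE hxE hyE.
rewrite -/(lc_gamma (ux (tau t)) (uy (tau t)) (s (tau t))).
rewrite -/(lc_vz (ux (tau t)) (uy (tau t)) (s (tau t))).
have -> : (c * t - z t + z t) / c = t by field; rewrite gt_eqF.
move=> [[hX hY hZ] [hU1 hU2 hS]].
rewrite /EOM_at /= DE pzE pxE pyE; split; split.
- apply: is_derive_eq (is_derive_time_of_hat It _ (is_derive_mulr k hU1)) _.
    by move=> ? /lightcone_at[[_ -> _ _] _].
  by apply: backk; exact: lorentz_u1.
- apply: is_derive_eq (is_derive_time_of_hat It _ (is_derive_mulr k hU2)) _.
    by move=> ? /lightcone_at[[_ _ -> _] _].
  by apply: backk; exact: lorentz_u2.
- have hg := is_derive_lc_gamma hU1 hU2 hS (lt0r_neq0 S0).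
  apply: is_derive_eq (is_derive_time_of_hat It _ (is_derive_mulr k (is_derive_sub hg hS))) _.
    by move=> ? /lightcone_at[[_ _ _ ->] _].
  by apply: backk; exact: lorentz_u3.
- apply: is_derive_eq (is_derive_time_of_hat It _ hX) _; first by move=> ? /hrel[[-> _ _] _].
  by apply: back; exact: velocity_x.
- apply: is_derive_eq (is_derive_time_of_hat It _ hY) _; first by move=> ? /hrel[[_ -> _] _].
  by apply: back; exact: velocity_y.
- apply: is_derive_eq (is_derive_time_of_hat It _ hZ) _; first by move=> ? /hrel[[_ _ ->] _].
  by apply: back; exact: velocity_z.
Qed.

End Backward.

End LightConeTime.

Theorem proposition1 (R : realType) (c m q : R) (A : potential R)
  (hc : 0 < c) (hm : 0 < m) (hA : pot_differentiable A) :
  (* (1) equations of motion  <->  reparametrized system *)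
  (forall (I J : set R) (x y z px py pz hx hy hz ux uy s : R -> R),
     open I -> is_interval I -> open J -> is_interval J ->
     (fun t => c * t - z t) @` I = J ->
     (forall t, I t ->
        let xi := c * t - z t in
        let u2 := (px t ^+ 2 + py t ^+ 2 + pz t ^+ 2) / (m * c) ^+ 2 in
        [/\ hx xi = x t, hy xi = y t & hz xi = z t] /\
        [/\ ux xi = px t / (m * c), uy xi = py t / (m * c) &
            s xi = Num.sqrt (1 + u2) - pz t / (m * c)]) ->
     ((forall t, I t -> EOM_at c m q A x y z px py pz t) <->
      (forall xi, J xi -> system_at c m q A hx hy hz ux uy s xi))) /\
  (* (2) Hamilton equations  <->  reparametrized system *)
  (forall (J : set R) (hx hy hz P1 P2 P3 : R -> R),
     open J ->
     (forall xi, J xi -> 0 < sH c m q A xi (hx xi) (hy xi) (hz xi) (P3 xi)) ->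
     ((forall xi, J xi -> hamilton_at c m q A hx hy hz P1 P2 P3 xi) <->
      (forall xi, J xi ->
         system_at c m q A hx hy hz
           (fun w => uH1 c m q A w (hx w) (hy w) (hz w) (P1 w))
           (fun w => uH2 c m q A w (hx w) (hy w) (hz w) (P2 w))
           (fun w => sH c m q A w (hx w) (hy w) (hz w) (P3 w)) xi))) /\
  (* (3) dH/dxi = partial H / partial xi along solutions of Hamilton's equations *)
  (forall (J : set R) (hx hy hz P1 P2 P3 : R -> R),
     open J ->
     (forall xi, J xi -> 0 < sH c m q A xi (hx xi) (hy xi) (hz xi) (P3 xi)) ->
     (forall xi, J xi -> hamilton_at c m q A hx hy hz P1 P2 P3 xi) ->
     forall xi, J xi ->
       is_derive xi 1
         (fun w => Hhat c m q A w (hx w) (hy w) (hz w) (P1 w) (P2 w) (P3 w))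
         (derive1 (fun w => Hhat c m q A w (hx xi) (hy xi) (hz xi) (P1 xi) (P2 xi) (P3 xi)) xi)).
Proof.
have [c0 m0] := (lt0r_neq0 hc, lt0r_neq0 hm).
split; [|split].
- move=> I J x y z px py pz hx hy hz ux uy s oI _ oJ _ IJ hrel.
  split=> [HE|HS] u Iu.
  + exact (eom_to_system hc hm oI oJ IJ hrel HE Iu).
  + exact (system_to_eom hc hm oI oJ IJ hrel HS Iu).
- move=> J hx hy hz P1 P2 P3 _ s_gt0.
  split=> h xi Jxi; have s0 := lt0r_neq0 (s_gt0 xi Jxi).
  + exact/(hamilton_at_iff_system_at c0 m0 hA P1 P2 s0)/h.
  + exact/(hamilton_at_iff_system_at c0 m0 hA P1 P2 s0)/h.
- move=> J hx hy hz P1 P2 P3 _ s_gt0 h xi Jxi.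
  exact (hamilton_at_energy c0 m0 hA (lt0r_neq0 (s_gt0 xi Jxi)) (h xi Jxi)).
Qed.
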